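(* Let $A$ be a finite-dimensional vector space with multiplications $\succ_A,\prec_A:A\otimes A\to A$, and define $x\circ_A y=x\succ_A y+x\prec_A y$ for all $x,y\in A$. Then the following statements are equivalent: (1) $(A,\succ_A,\prec_A)$ is an anti-pre-Leibniz algebra. (2) The identities (AL2), (AL3), (AL4) hold, together with $$(x\circ_A y)\succ_A z=x\prec_A(y\circ_A z)-y\prec_A(x\circ_A z),\quad\forall x,y,z\in A.$$ (3) $(A,\circ_A)$ is a Leibniz algebra and $(-\mathcal L_{\succ_A},-\mathcal R_{\prec_A},A)$ is a representation of $(A,\circ_A)$. (4) $(A,\circ_A)$ is a Leibniz algebra and $(-\mathcal L^*_{\succ_A},\mathcal L^*_{\succ_A}+\mathcal R^*_{\prec_A},A^* )$ is a representation of $(A,\circ_A)$.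
   Context: All vector spaces are finite-dimensional over a field $\mathbb K$ of characteristic zero. For a multiplication $\ast$ on $A$, $\mathcal L_\ast(x)y=x\ast y$ and $\mathcal R_\ast(x)y=y\ast x$. For a linear map $f:A\to\mathrm{End}(V)$, $f^*:A\to\mathrm{End}(V^* )$ is defined by $\langle f^*(x)u^*,v\rangle=-\langle u^*,f(x)v\rangle$. A Leibniz algebra is a vector space $A$ with a multiplication $\circ_A$ satisfying $x\circ_A(y\circ_A z)=(x\circ_A y)\circ_A z+y\circ_A(x\circ_A z)$ for all $x,y,z$. A representation of a Leibniz algebra $(A,\circ_A)$ is a triple $(l,r,V)$ with $V$ a vector space and linear maps $l,r:A\to\mathrm{End}(V)$ such that for all $x,y\in A,v\in V$: $l(x\circ_A y)v=l(x)l(y)v-l(y)l(x)v$; $r(x\circ_A y)v=l(x)r(y)v-r(y)l(x)v$; $r(y)l(x)v=-r(y)r(x)v$. An anti-pre-Leibniz algebra is a vector space $A$ with multiplications $\succ_A,\prec_A$ such that, with $x\circ_A y=x\succ_A y+x\prec_A y$, for all $x,y,z\in A$: (AL1) $(x\circ_A y)\prec_A z=x\succ_A(y\circ_A z)-y\succ_A(x\circ_A z)$; (AL2) $(x\circ_A y)\succ_A z=y\succ_A(x\succ_A z)-x\succ_A(y\succ_A z)$; (AL3) $x\prec_A(y\circ_A z)=(y\succ_A x)\prec_A z-y\succ_A(x\prec_A z)$; (AL4) $(x\succ_A y)\prec_A z=-(y\prec_A x)\prec_A z$. *)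

From HB Require Import structures.
From mathcomp Require Import all_boot all_order all_algebra.
Set Implicit Arguments. Unset Strict Implicit. Unset Printing Implicit Defensive.
Import GRing.Theory.
Local Open Scope ring_scope.

Section Defs.
Variables (K : fieldType) (A : vectType K).

Definition bilinear_mul (m : A -> A -> A) : Prop :=
  (forall (a : K) x y z, m (a *: x + y) z = a *: m x z + m y z) /\
  (forall (a : K) x y z, m z (a *: x + y) = a *: m z x + m z y).

Definition circ (succ prec : A -> A -> A) x y := succ x y + prec x y.

Definition is_leibniz (m : A -> A -> A) : Prop :=
  forall x y z, m x (m y z) = m (m x y) z + m y (m x z).

Definition anti_pre_leibniz (succ prec : A -> A -> A) : Prop :=
  let o := circ succ prec in
  (forall x y z, prec (o x y) z = succ x (o y z) - succ y (o x z)) /\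
  (forall x y z, succ (o x y) z = succ y (succ x z) - succ x (succ y z)) /\
  (forall x y z, prec x (o y z) = prec (succ y x) z - succ y (prec x z)) /\
  (forall x y z, prec (succ x y) z = - prec (prec y x) z).

Definition is_rep (V : lmodType K) (m : A -> A -> A) (l r : A -> V -> V) : Prop :=
  (forall x (a : K) u v, l x (a *: u + v) = a *: l x u + l x v) /\
  (forall x (a : K) u v, r x (a *: u + v) = a *: r x u + r x v) /\
  (forall (a : K) x y v, l (a *: x + y) v = a *: l x v + l y v) /\
  (forall (a : K) x y v, r (a *: x + y) v = a *: r x v + r y v) /\
  (forall x y v, l (m x y) v = l x (l y v) - l y (l x v)) /\
  (forall x y v, r (m x y) v = l x (r y v) - r y (l x v)) /\
  (forall x y v, r y (l x v) = - r y (r x v)).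

Definition Lop (m : A -> A -> A) (x : A) : 'End(A) := linfun (m x).
Definition Rop (m : A -> A -> A) (x : A) : 'End(A) := linfun (fun y => m y x).

(* dual action on A^* = 'Hom(A, K^o): <f^*(x) u*, v> = - <u*, f(x) v> *)
Definition dualop (phi : 'End(A)) (u : 'Hom(A, K^o)) : 'Hom(A, K^o) :=
  - (u \o phi)%VF.

End Defs.

(* The identities (AL2)-(AL4), common to (1), (2) and (3), are exactly the
   representation axioms for (-L_succ, -R_prec, A). Under them the defect of (AL1)
   equals the defect of its succ-analogue in (2), while the sum of the two defects
   is minus the Leibniz defect of o; hence (AL1), its analogue and, as 2 != 0, the
   Leibniz identity are equivalent. Finally (l, r, V) is a representation iff the
   transposes of l and of -l-r form one on V^*, since transposition reverses
   composition and linear functionals separate points; for (l, r) = (-L_succ, -R_prec)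
   this is (3) <-> (4). *)

From HB Require Import structures.
From mathcomp Require Import all_boot all_order all_algebra ring.
Import GRing.Theory.
Local Open Scope ring_scope.
Set Implicit Arguments. Unset Strict Implicit. Unset Printing Implicit Defensive.

Lemma eq_by_functionals (K : fieldType) (V : vectType K) (v w : V) :
  (forall u : 'Hom(V, K^o), u v = u w) -> v = w.
Proof.
move=> eq_vw; apply/eqP; rewrite -subr_eq0; apply/eqP.
rewrite (coord_vbasis (memvf (v - w))); apply: big1 => i _.
have := eq_vw (@linfun _ V K^o (coord (vbasis fullv) i)).
by rewrite !lfunE /= linearB /= => ->; rewrite subrr scale0r.
Qed.

(* An identity in a vector space holds once it holds under every linear functional,
   where it becomes a ring identity in the base field. *)
Ltac vect_ring :=
  let u := fresh "u" in
  apply: eq_by_functionals => u; rewrite ?(raddfD u, raddfN u, raddfB u); ring.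

Section DualOperator.
Variables (K : fieldType) (V : vectType K).
Implicit Types (phi psi : 'End(V)) (u : 'Hom(V, K^o)).

Lemma dualopE phi u v : dualop phi u v = - u (phi v).
Proof. by rewrite /dualop opp_lfunE comp_lfunE. Qed.

Lemma dualop_eqP phi psi : (forall u, dualop phi u = dualop psi u) <-> phi = psi.
Proof.
split=> [eq_dual | -> //]; apply/lfunP => v; apply: eq_by_functionals => u.
by apply: oppr_inj; rewrite -!dualopE eq_dual.
Qed.

Lemma dualop_linear phi (a : K) u w :
  dualop phi (a *: u + w) = a *: dualop phi u + dualop phi w.
Proof. by apply/lfunP => v; rewrite !(dualopE, add_lfunE, scale_lfunE) opprD scalerN. Qed.

Lemma dualopD phi psi u : dualop (phi + psi) u = dualop phi u + dualop psi u.
Proof. by apply/lfunP => v; rewrite !(dualopE, add_lfunE) linearD opprD. Qed.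

Lemma dualopZ (a : K) phi u : dualop (a *: phi) u = a *: dualop phi u.
Proof. by apply/lfunP => v; rewrite !(dualopE, scale_lfunE) linearZ scalerN. Qed.

Lemma dualopN phi u : dualop (- phi) u = - dualop phi u.
Proof. by apply/lfunP => v; rewrite !(dualopE, opp_lfunE) linearN. Qed.

Lemma dualopB phi psi u : dualop (phi - psi) u = dualop phi u - dualop psi u.
Proof. by rewrite dualopD dualopN. Qed.

Lemma dualop_comp phi psi u : dualop phi (dualop psi u) = dualop (- (psi \o phi)%VF) u.
Proof. by apply/lfunP => v; rewrite !dualopE opp_lfunE comp_lfunE (linearN u). Qed.

Lemma dualop_commutator phi psi u :
  dualop phi (dualop psi u) - dualop psi (dualop phi u) =
  dualop ((phi \o psi)%VF - (psi \o phi)%VF) u.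
Proof. by rewrite !dualop_comp -dualopB opprK addrC. Qed.

End DualOperator.

Lemma is_rep_ext (K : fieldType) (A : vectType K) (V : lmodType K) (m : A -> A -> A)
    (l l' r r' : A -> V -> V) :
  (forall x v, l x v = l' x v) -> (forall x v, r x v = r' x v) ->
  is_rep m l r -> is_rep m l' r'.
Proof.
move=> El Er [H1 [H2 [H3 [H4 [H5 [H6 H7]]]]]].
by do !split=> *; rewrite -?El -?Er;
  [apply: H1 | apply: H2 | apply: H3 | apply: H4 | apply: H5 | apply: H6 | apply: H7].
Qed.

Section DualRepresentation.
Variables (K : fieldType) (A V : vectType K) (m : A -> A -> A) (l r : A -> 'End(V)).

Lemma is_repE :
  is_rep m (fun x => l x) (fun x => r x) <->
  [/\ forall a x y, l (a *: x + y) = a *: l x + l y,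
      forall a x y, r (a *: x + y) = a *: r x + r y,
      forall x y, l (m x y) = (l x \o l y)%VF - (l y \o l x)%VF,
      forall x y, r (m x y) = (l x \o r y)%VF - (r y \o l x)%VF
    & forall x y, (r y \o l x)%VF = - (r y \o r x)%VF].
Proof.
split=> [[_ [_ [Hl [Hr [H1 [H2 H3]]]]]] | [Hl Hr H1 H2 H3]].
  by split=> *; apply/lfunP => v; rewrite !lfun_simp;
    [apply: Hl | apply: Hr | apply: H1 | apply: H2 | apply: H3].
do !split=> *; rewrite ?linearP //.
- by rewrite Hl !lfun_simp.
- by rewrite Hr !lfun_simp.
- by rewrite H1 !lfun_simp.
- by rewrite H2 !lfun_simp.
- by rewrite -comp_lfunE H3 !lfun_simp.
Qed.

Lemma dualop_linear_inP (f : A -> 'End(V)) :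
  (forall a x y u, dualop (f (a *: x + y)) u = a *: dualop (f x) u + dualop (f y) u) <->
  (forall a x y, f (a *: x + y) = a *: f x + f y).
Proof.
have E a x y u : a *: dualop (f x) u + dualop (f y) u = dualop (a *: f x + f y) u.
  by rewrite dualopD dualopZ.
split=> H a x y; last by move=> u; rewrite H E.
by apply/dualop_eqP => u; rewrite -E.
Qed.

Lemma dualop_leibnizP (f : A -> 'End(V)) :
  (forall x y u, dualop (f (m x y)) u =
     dualop (l x) (dualop (f y) u) - dualop (f y) (dualop (l x) u)) <->
  (forall x y, f (m x y) = (l x \o f y)%VF - (f y \o l x)%VF).
Proof.
split=> H x y; last by move=> u; rewrite H dualop_commutator.
by apply/dualop_eqP => u; rewrite -dualop_commutator.
Qed.

Lemma dualop_antisymP (g : A -> 'End(V)) :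
  (forall x y u, dualop (g y) (dualop (l x) u) = - dualop (g y) (dualop (g x) u)) <->
  (forall x y, (l x \o g y)%VF = - (g x \o g y)%VF).
Proof.
split=> H x y; last by move=> u; rewrite !dualop_comp H dualopN.
by apply/dualop_eqP => u; apply: oppr_inj; rewrite -dualopN -!dualop_comp.
Qed.

Lemma opp_sub_linear (Hl : forall a x y, l (a *: x + y) = a *: l x + l y) a x y :
  - l (a *: x + y) - r (a *: x + y) = a *: (- l x - r x) + (- l y - r y) <->
  r (a *: x + y) = a *: r x + r y.
Proof.
have -> : a *: (- l x - r x) + (- l y - r y) = - l (a *: x + y) - (a *: r x + r y).
  by rewrite Hl scalerDr !scalerN !opprD addrACA.
by split=> [/subrI | ->].
Qed.

Lemma opp_sub_leibniz (H1 : forall x y, l (m x y) = (l x \o l y)%VF - (l y \o l x)%VF) x y :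
  - l (m x y) - r (m x y) = (l x \o (- l y - r y))%VF - ((- l y - r y) \o l x)%VF <->
  r (m x y) = (l x \o r y)%VF - (r y \o l x)%VF.
Proof.
have -> : (l x \o (- l y - r y))%VF - ((- l y - r y) \o l x)%VF =
          - l (m x y) - ((l x \o r y)%VF - (r y \o l x)%VF).
  by rewrite H1 comp_lfunDr comp_lfunDl !comp_lfunNr !comp_lfunNl; vect_ring.
by split=> [/subrI | ->].
Qed.

Lemma opp_sub_antisym x y :
  (l x \o (- l y - r y))%VF = - ((- l x - r x) \o (- l y - r y))%VF <->
  (r x \o l y)%VF = - (r x \o r y)%VF.
Proof.
have E : (l x \o (- l y - r y))%VF + ((- l x - r x) \o (- l y - r y))%VF =
         (r x \o l y)%VF + (r x \o r y)%VF.
  by rewrite !comp_lfunDr !comp_lfunDl !comp_lfunNr !comp_lfunNl; vect_ring.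
by split=> H; apply/eqP; rewrite -addr_eq0; [rewrite -E | rewrite E]; rewrite H addNr.
Qed.

Lemma is_rep_dualE :
  is_rep m (fun x => dualop (l x)) (fun x => dualop (- l x - r x)) <->
  [/\ forall a x y, l (a *: x + y) = a *: l x + l y,
      forall a x y, r (a *: x + y) = a *: r x + r y,
      forall x y, l (m x y) = (l x \o l y)%VF - (l y \o l x)%VF,
      forall x y, r (m x y) = (l x \o r y)%VF - (r y \o l x)%VF
    & forall x y, (r y \o l x)%VF = - (r y \o r x)%VF].
Proof.
pose psi x := - l x - r x.
split=> [[_ [_ [Dl [Dpsi [D1 [Dpsi1 Dpsi2]]]]]] | [Hl Hr H1 H2 H3]].
  have Hl := (dualop_linear_inP l).1 Dl.
  have H1 := (dualop_leibnizP l).1 D1.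
  split=> // [a x y | x y | x y].
  - by apply/(opp_sub_linear Hl a x y); apply: ((dualop_linear_inP psi).1 Dpsi).
  - by apply/(opp_sub_leibniz H1 x y); apply: ((dualop_leibnizP psi).1 Dpsi1).
  - by apply/(opp_sub_antisym y x); apply: ((dualop_antisymP psi).1 Dpsi2).
do !split; try by move=> *; apply: dualop_linear.
- exact: (dualop_linear_inP l).2 Hl.
- by apply: (dualop_linear_inP psi).2 => a x y; apply/(opp_sub_linear Hl a x y).
- exact: (dualop_leibnizP l).2 H1.
- by apply: (dualop_leibnizP psi).2 => x y; apply/(opp_sub_leibniz H1 x y).
- by apply: (dualop_antisymP psi).2 => x y; apply/(opp_sub_antisym x y).
Qed.

Lemma is_rep_dual :
  is_rep m (fun x => l x) (fun x => r x) <->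
  is_rep m (fun x => dualop (l x)) (fun x => dualop (- l x - r x)).
Proof. exact: iff_trans is_repE (iff_sym is_rep_dualE). Qed.

End DualRepresentation.

Section BilinearProduct.
Variables (K : fieldType) (A : vectType K) (m : A -> A -> A).
Hypothesis Hm : bilinear_mul m.

Definition lmul x : {linear A -> A} :=
  HB.pack (m x) (GRing.isLinear.Build K A A *:%R (m x) (fun a u v => Hm.2 a u v x)).

Definition rmul x : {linear A -> A} :=
  HB.pack (fun y => m y x)
    (GRing.isLinear.Build K A A *:%R (fun y => m y x) (fun a u v => Hm.1 a u v x)).

Lemma LopE x v : Lop m x v = m x v. Proof. exact: lfunE (lmul x) v. Qed.
Lemma RopE x v : Rop m x v = m v x. Proof. exact: lfunE (rmul x) v. Qed.

Lemma bmulDl x y z : m (x + y) z = m x z + m y z. Proof. exact: linearD (rmul z) x y. Qed.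
Lemma bmulDr x y z : m x (y + z) = m x y + m x z. Proof. exact: linearD (lmul x) y z. Qed.
Lemma bmulNl x y : m (- x) y = - m x y. Proof. exact: linearN (rmul y) x. Qed.
Lemma bmulNr x y : m x (- y) = - m x y. Proof. exact: linearN (lmul x) y. Qed.

End BilinearProduct.

Section AntiPreLeibniz.
Variables (K : fieldType) (A : vectType K) (succ prec : A -> A -> A).
Hypotheses (Hsucc : bilinear_mul succ) (Hprec : bilinear_mul prec).
Local Notation o := (circ succ prec).

Definition AL1 := forall x y z, prec (o x y) z = succ x (o y z) - succ y (o x z).
Definition AL2 := forall x y z, succ (o x y) z = succ y (succ x z) - succ x (succ y z).
Definition AL3 := forall x y z, prec x (o y z) = prec (succ y x) z - succ y (prec x z).
Definition AL4 := forall x y z, prec (succ x y) z = - prec (prec y x) z.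
Definition AL1' := forall x y z, succ (o x y) z = prec x (o y z) - prec y (o x z).

Definition AL1_defect x y z := prec (o x y) z - (succ x (o y z) - succ y (o x z)).
Definition AL1'_defect x y z := succ (o x y) z - (prec x (o y z) - prec y (o x z)).

Lemma AL1P : AL1 <-> forall x y z, AL1_defect x y z = 0.
Proof. by split=> H x y z; [rewrite /AL1_defect H subrr | apply/subr0_eq/H]. Qed.

Lemma AL1'P : AL1' <-> forall x y z, AL1'_defect x y z = 0.
Proof. by split=> H x y z; [rewrite /AL1'_defect H subrr | apply/subr0_eq/H]. Qed.

Lemma leibniz_defectE x y z :
  o x (o y z) - (o (o x y) z + o y (o x z)) = - (AL1_defect x y z + AL1'_defect x y z).
Proof. by rewrite /AL1_defect /AL1'_defect /circ; vect_ring. Qed.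

Lemma AL1'_defectE : AL2 -> AL3 -> AL4 ->
  forall x y z, AL1'_defect x y z = AL1_defect x y z.
Proof.
move=> h2 h3 h4 x y z.
have skew : prec x (o y z) - prec y (o x z) =
            succ x (prec y z) - succ y (prec x z) - prec (o x y) z.
  by rewrite !h3 h4 /circ (bmulDl Hprec); vect_ring.
by rewrite /AL1'_defect /AL1_defect h2 skew /circ !(bmulDr Hsucc); vect_ring.
Qed.

Lemma AL1_AL1'_leibniz : AL1 -> AL1' -> is_leibniz o.
Proof.
move=> /AL1P h1 /AL1'P h1' x y z; apply: subr0_eq.
by rewrite leibniz_defectE h1 h1' addr0 oppr0.
Qed.

Lemma AL1_iff_AL1' : AL2 -> AL3 -> AL4 -> AL1 <-> AL1'.
Proof.
move=> h2 h3 h4; split=> [/AL1P H | /AL1'P H].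
  by apply/AL1'P => x y z; rewrite AL1'_defectE.
by apply/AL1P => x y z; rewrite -AL1'_defectE.
Qed.

Lemma leibniz_AL1 : (2%:R : K) != 0 -> AL2 -> AL3 -> AL4 -> is_leibniz o -> AL1.
Proof.
move=> two h2 h3 h4 hL; apply/AL1P => x y z; apply/eqP.
have /eqP := leibniz_defectE x y z.
rewrite AL1'_defectE // hL subrr eq_sym oppr_eq0 -mulr2n -scaler_nat scaler_eq0.
by rewrite (negbTE two).
Qed.

Lemma is_rep_AL234 :
  is_rep o (fun x v => - succ x v) (fun x v => - prec v x) <-> AL2 /\ AL3 /\ AL4.
Proof.
have negE := (bmulNl Hsucc, bmulNr Hsucc, bmulNl Hprec, bmulNr Hprec, @opprK A).
split=> [[_ [_ [_ [_ [R1 [R2 R3]]]]]] | [h2 [h3 h4]]].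
  split; [|split] => x y z.
  - by rewrite -[LHS]opprK R1 !negE opprB.
  - by rewrite -[LHS]opprK R2 !negE opprB.
  - by have := R3 x z y; rewrite !negE.
do !split=> *.
- by rewrite Hsucc.2 opprD scalerN.
- by rewrite Hprec.1 opprD scalerN.
- by rewrite Hsucc.1 opprD scalerN.
- by rewrite Hprec.2 opprD scalerN.
- by rewrite !negE h2 opprB.
- by rewrite !negE h3 opprB.
- by rewrite !negE h4.
Qed.

End AntiPreLeibniz.

Theorem proposition2p6 (K : fieldType) (charK : [pchar K] =i pred0)
  (A : vectType K) (succ prec : A -> A -> A)
  (Hsucc : bilinear_mul succ) (Hprec : bilinear_mul prec) :
  let o := circ succ prec in
  [<-> (* (1) *) anti_pre_leibniz succ prec;
       (* (2) *) (forall x y z, succ (o x y) z = succ y (succ x z) - succ x (succ y z)) /\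
                 (forall x y z, prec x (o y z) = prec (succ y x) z - succ y (prec x z)) /\
                 (forall x y z, prec (succ x y) z = - prec (prec y x) z) /\
                 (forall x y z, succ (o x y) z = prec x (o y z) - prec y (o x z));
       (* (3) *) is_leibniz o /\
                 is_rep o (fun x (v : A) => - succ x v) (fun x v => - prec v x);
       (* (4) *) is_leibniz o /\
                 is_rep o
                   (fun x (u : 'Hom(A, K^o)) => - dualop (Lop succ x) u)
                   (fun x u => dualop (Lop succ x) u + dualop (Rop prec x) u)].
Proof.
move=> o.
have two : (2%:R : K) != 0 by rewrite (pcharf0P K).1.
have rep_dual : is_rep o (fun x v => - succ x v) (fun x v => - prec v x) <->
    is_rep o (fun x (u : 'Hom(A, K^o)) => - dualop (Lop succ x) u)
             (fun x u => dualop (Lop succ x) u + dualop (Rop prec x) u).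
  apply: iff_trans
    (iff_trans (is_rep_dual o (fun x => - Lop succ x) (fun x => - Rop prec x)) _).
    by split; apply: is_rep_ext => x v; rewrite opp_lfunE ?LopE ?RopE.
  by split; apply: is_rep_ext => x u; rewrite ?dualopN // !opprK dualopD.
tfae.
- case=> h1 [h2 [h3 h4]]; do !split => //.
  exact: (AL1_iff_AL1' Hsucc Hprec h2 h3 h4).1.
- case=> h2 [h3 [h4 h1']]; split.
    exact: AL1_AL1'_leibniz ((AL1_iff_AL1' Hsucc Hprec h2 h3 h4).2 h1') h1'.
  exact/(is_rep_AL234 Hsucc Hprec).
- by case=> hL /rep_dual.
- case=> hL /rep_dual /(is_rep_AL234 Hsucc Hprec) [h2 [h3 h4]].
  by do !split => //; apply: leibniz_AL1 Hsucc Hprec two h2 h3 h4 hL.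
Qed.
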